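(* For $k \geq 1$, assume $\mathbf{z}_{k-1} \in \hat{Z}_{k-1} = \{\hat{\mathbf{G}}_{k-1}, \hat{\mathbf{c}}_{k-1}, \hat{\mathbf{A}}_{k-1}, \hat{\mathbf{b}}_{k-1}\}$ and $\mathbf{w}_{k-1}, \mathbf{w}_k \in W = \{\mathbf{G}_w, \mathbf{c}_w, \mathbf{A}_w, \mathbf{b}_w\}$. Consider the transformed descriptor system $\tilde{\mathbf{z}}_k = \tilde{\mathbf{A}} \mathbf{z}_{k-1} + \tilde{\mathbf{B}} \mathbf{u}_{k-1} + \tilde{\mathbf{B}}_w \mathbf{w}_{k-1}$, $\mathbf{0} = \check{\mathbf{A}} \mathbf{z}_{k-1} + \check{\mathbf{B}} \mathbf{u}_{k-1} + \check{\mathbf{B}}_w \mathbf{w}_{k-1}$, $\mathbf{y}_k = \mathbf{C}\mathbf{T}\mathbf{z}_k + \mathbf{D}\mathbf{u}_k + \mathbf{D}_v \mathbf{v}_k$. If there exists a known constrained zonotope $X_a = \{\mathbf{G}_a, \mathbf{c}_a, \mathbf{A}_a, \mathbf{b}_a\} \subset \mathbb{R}^n$ with $\mathbf{x}_k \in X_a$ for all $k \geq 0$, then $\mathbf{z}_k \in \bar{Z}_k = \{\bar{\mathbf{G}}_k, \bar{\mathbf{c}}_k, \bar{\mathbf{A}}_k, \bar{\mathbf{b}}_k\}$, with \[ \bar{\mathbf{G}}_k = \begin{bmatrix} \tilde{\mathbf{A}} \hat{\mathbf{G}}_{k-1} & \tilde{\mathbf{B}}_w \mathbf{G}_w & \mathbf{0}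 & \mathbf{0}\\ \mathbf{0} & \mathbf{0} & \check{\mathbf{G}}_a & \mathbf{0}\end{bmatrix},\quad \bar{\mathbf{c}}_k = \begin{bmatrix} \tilde{\mathbf{A}} \hat{\mathbf{c}}_{k-1} + \tilde{\mathbf{B}} \mathbf{u}_{k-1} + \tilde{\mathbf{B}}_w \mathbf{c}_w \\ \check{\mathbf{c}}_a\end{bmatrix}, \] \[ \bar{\mathbf{A}}_k = \begin{bmatrix} \mathrm{blkdiag}(\hat{\mathbf{A}}_{k-1}, \mathbf{A}_w, \mathbf{A}_a, \mathbf{A}_w) \\ \begin{bmatrix} \check{\mathbf{A}} \begin{bmatrix} \tilde{\mathbf{A}} \hat{\mathbf{G}}_{k-1} \\ \mathbf{0} \end{bmatrix} & \check{\mathbf{A}} \begin{bmatrix} \tilde{\mathbf{B}}_w \mathbf{G}_w \\ \mathbf{0} \end{bmatrix} & \check{\mathbf{A}} \begin{bmatrix} \mathbf{0} \\ \check{\mathbf{G}}_a \end{bmatrix} & \check{\mathbf{B}}_w \mathbf{G}_w \end{bmatrix} \end{bmatrix}, \] (the first block row is the block-diagonal matrix spanning all four column blocks, the second block row is the given row of four blocks), \[ \bar{\mathbf{b}}_k = \begin{bmatrix} [\hat{\mathbf{b}}_{k-1}^T \;\; \mathbf{b}_w^T \;\; \mathbf{b}_a^T \;\; \mathbf{b}_w^T]^T \\ -\check{\mathbf{A}} \begin{bmatrix} \tilde{\mathbf{A}} \hat{\mathbf{c}}_{k-1} + \tilde{\mathbf{B}} \mathbf{u}_{k-1} + \tilde{\mathbf{B}}_w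 \mathbf{c}_w \\ \check{\mathbf{c}}_a\end{bmatrix} - \check{\mathbf{B}} \mathbf{u}_k - \check{\mathbf{B}}_w \mathbf{c}_w \end{bmatrix}. \]
   Context: A constrained zonotope is $Z = \{\mathbf{G}_z,\mathbf{c}_z,\mathbf{A}_z,\mathbf{b}_z\} = \{\mathbf{c}_z + \mathbf{G}_z\boldsymbol{\xi} : \|\boldsymbol{\xi}\|_\infty \le 1,\ \mathbf{A}_z\boldsymbol{\xi} = \mathbf{b}_z\}$. Consider the linear discrete-time descriptor system $\mathbf{E}\mathbf{x}_k = \mathbf{A}\mathbf{x}_{k-1} + \mathbf{B}\mathbf{u}_{k-1} + \mathbf{B}_w\mathbf{w}_{k-1}$, $\mathbf{y}_k = \mathbf{C}\mathbf{x}_k + \mathbf{D}\mathbf{u}_k + \mathbf{D}_v\mathbf{v}_k$ with $\mathbf{E} \in \mathbb{R}^{n\times n}$ possibly singular. Let $\mathbf{E} = \mathbf{U}\boldsymbol{\Sigma}\mathbf{V}^T$ be an SVD with $\boldsymbol{\Sigma} = \mathrm{blkdiag}(\tilde{\boldsymbol{\Sigma}},\mathbf{0})$, $\tilde{\boldsymbol{\Sigma}} \in \mathbb{R}^{n_z\times n_z}$ diagonal containing the $n_z = \mathrm{rank}(\mathbf{E})$ nonzero singular values, $\mathbf{T} = (\mathbf{V}^T)^{-1}$, and $\mathbf{z}_k = (\tilde{\mathbf{z}}_k,\check{\mathbf{z}}_k) = \mathbf{T}^{-1}\mathbf{x}_k$ with $\tilde{\mathbf{z}}_k \in \mathbb{R}^{n_z}$.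 The matrices are defined by $[\tilde{\mathbf{A}};\check{\mathbf{A}}] = \mathrm{blkdiag}(\tilde{\boldsymbol{\Sigma}}^{-1},\mathbf{I})\mathbf{U}^{-1}\mathbf{A}\mathbf{T}$, $[\tilde{\mathbf{B}};\check{\mathbf{B}}] = \mathrm{blkdiag}(\tilde{\boldsymbol{\Sigma}}^{-1},\mathbf{I})\mathbf{U}^{-1}\mathbf{B}$, $[\tilde{\mathbf{B}}_w;\check{\mathbf{B}}_w] = \mathrm{blkdiag}(\tilde{\boldsymbol{\Sigma}}^{-1},\mathbf{I})\mathbf{U}^{-1}\mathbf{B}_w$, where tilde-blocks have $n_z$ rows. The static relation $\mathbf{0} = \check{\mathbf{A}}\mathbf{z} + \check{\mathbf{B}}\mathbf{u} + \check{\mathbf{B}}_w\mathbf{w}$ is shifted forward to hold at time $k$, i.e. $\check{\mathbf{A}}\mathbf{z}_k + \check{\mathbf{B}}\mathbf{u}_k + \check{\mathbf{B}}_w\mathbf{w}_k = \mathbf{0}$. With $Z_a = \mathbf{T}^{-1}X_a = \{\mathbf{T}^{-1}\mathbf{G}_a,\mathbf{T}^{-1}\mathbf{c}_a,\mathbf{A}_a,\mathbf{b}_a\}$, write $\mathbf{T}^{-1}\mathbf{c}_a = [\tilde{\mathbf{c}}_a^T\ \check{\mathbf{c}}_a^T]^T$ and $\mathbf{T}^{-1}\mathbf{G}_a = [\tilde{\mathbf{G}}_a^T\ \check{\mathbf{G}}_a^T]^T$ (split conformally with $(\tilde{\mathbf{z}},\check{\mathbf{z}})$). *)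

From HB Require Import structures.
From mathcomp Require Import all_boot all_order all_algebra.
Set Implicit Arguments. Unset Strict Implicit. Unset Printing Implicit Defensive.
Import Order.TTheory GRing.Theory Num.Theory.
Local Open Scope ring_scope.

Section CZ.
Variable R : realFieldType.

Definition in_cz {n ng nc : nat} (G : 'M[R]_(n, ng)) (c : 'cV[R]_n)
  (A : 'M[R]_(nc, ng)) (b : 'cV[R]_nc) (x : 'cV[R]_n) : Prop :=
  exists xi : 'cV[R]_ng, (forall i, `|xi i 0| <= 1) /\ A *m xi = b /\ x = c + G *m xi.

Definition blkdiag2 {m1 n1 m2 n2 : nat} (A1 : 'M[R]_(m1, n1)) (A2 : 'M[R]_(m2, n2))
  : 'M[R]_(m1 + m2, n1 + n2) := block_mx A1 0 0 A2.

(* SVD-based transformation: n = nz + nc, E = U blkdiag(Sigma~, 0) V^T *)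
Definition Tmat {nz nc : nat} (V : 'M[R]_(nz + nc)) : 'M[R]_(nz + nc) := invmx V^T.

Definition scaleU {nz nc : nat} (U : 'M[R]_(nz + nc)) (sigma : 'rV[R]_nz)
  : 'M[R]_(nz + nc) := blkdiag2 (invmx (diag_mx sigma)) (1%:M : 'M[R]_nc) *m invmx U.

Definition Atil {nz nc} U sigma V (A : 'M[R]_(nz + nc)) : 'M[R]_(nz, nz + nc) :=
  usubmx (scaleU U sigma *m A *m Tmat V).
Definition Achk {nz nc} U sigma V (A : 'M[R]_(nz + nc)) : 'M[R]_(nc, nz + nc) :=
  dsubmx (scaleU U sigma *m A *m Tmat V).
Definition Btil {nz nc m} U sigma (B : 'M[R]_(nz + nc, m)) : 'M[R]_(nz, m) :=
  usubmx (scaleU U sigma *m B).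
Definition Bchk {nz nc m} U sigma (B : 'M[R]_(nz + nc, m)) : 'M[R]_(nc, m) :=
  dsubmx (scaleU U sigma *m B).

End CZ.

(* Stack the parameter vectors of z_{k-1}, w_{k-1}, x_k and w_k into one vector: the
   Cartesian product of Ẑ_{k-1}, W, X_a and W is again a constrained zonotope.  The
   dynamics make z̃_k, and T^{-1} makes ž_k, an affine image of that product, while the
   shifted static relation Ǎ z_k + B̌ u_k + B̌_w w_k = 0 is a linear equation on it, which
   a generalized intersection turns into the extra constraint rows of Ā_k. *)

From HB Require Import structures.
From mathcomp Require Import all_boot all_order all_algebra.
Import Order.TTheory GRing.Theory Num.Theory.
Local Open Scope ring_scope.

Section ConstrainedZonotopeOperations.
Set Implicit Arguments.
Variable R : realFieldType.

Lemma in_cz_prod {n1 n2 ng1 ng2 nc1 nc2 : nat}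
    (G1 : 'M[R]_(n1, ng1)) (c1 : 'cV_n1) (A1 : 'M_(nc1, ng1)) (b1 : 'cV_nc1)
    (G2 : 'M[R]_(n2, ng2)) (c2 : 'cV_n2) (A2 : 'M_(nc2, ng2)) (b2 : 'cV_nc2)
    (x1 : 'cV_n1) (x2 : 'cV_n2) :
  in_cz G1 c1 A1 b1 x1 -> in_cz G2 c2 A2 b2 x2 ->
  in_cz (blkdiag2 G1 G2) (col_mx c1 c2) (blkdiag2 A1 A2) (col_mx b1 b2)
        (col_mx x1 x2).
Proof.
move=> [xi1 [bd1 [eqA1 ->]]] [xi2 [bd2 [eqA2 ->]]].
exists (col_mx xi1 xi2); split; last split.
- by move=> i; rewrite -(splitK i); case: split => j; rewrite ?col_mxEu ?col_mxEd.
- by rewrite /blkdiag2 mul_block_col !mul0mx addr0 add0r eqA1 eqA2.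
- by rewrite /blkdiag2 mul_block_col !mul0mx addr0 add0r add_col_mx.
Qed.

Lemma in_cz_affine {n p ng nc : nat} (M : 'M[R]_(p, n)) (d : 'cV_p)
    (G : 'M[R]_(n, ng)) (c : 'cV_n) (A : 'M_(nc, ng)) (b : 'cV_nc) (x : 'cV_n) :
  in_cz G c A b x -> in_cz (M *m G) (M *m c + d) A b (M *m x + d).
Proof.
move=> [xi [bd [eqA ->]]]; exists xi; split=> //; split=> //.
by rewrite mulmxDr mulmxA addrAC.
Qed.

Lemma in_cz_meet {n p ng nc : nat} (N : 'M[R]_(p, n)) (t : 'cV_p)
    (G : 'M[R]_(n, ng)) (c : 'cV_n) (A : 'M_(nc, ng)) (b : 'cV_nc) (x : 'cV_n) :
  in_cz G c A b x -> N *m x = t ->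
  in_cz G c (col_mx A (N *m G)) (col_mx b (t - N *m c)) x.
Proof.
move=> [xi [bd [eqA eqx]]] eqN; exists xi; split=> //; split=> //.
by rewrite mul_col_mx eqA -eqN eqx mulmxDr mulmxA addrAC subrr add0r.
Qed.

Lemma mul_row_blkdiag2 {p m1 m2 n1 n2 : nat}
    (X1 : 'M[R]_(p, m1)) (X2 : 'M_(p, m2)) (G1 : 'M_(m1, n1)) (G2 : 'M_(m2, n2)) :
  row_mx X1 X2 *m blkdiag2 G1 G2 = row_mx (X1 *m G1) (X2 *m G2).
Proof. by rewrite mul_row_block !mulmx0 addr0 add0r. Qed.

End ConstrainedZonotopeOperations.

Lemma mul_mx_col_row (R : pzSemiRingType) {p m1 m2 n1 n2 : nat}
    (A : 'M[R]_(p, m1 + m2)) (X1 : 'M_(m1, n1)) (X2 : 'M_(m1, n2))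
    (Y1 : 'M_(m2, n1)) (Y2 : 'M_(m2, n2)) :
  A *m col_mx (row_mx X1 X2) (row_mx Y1 Y2) =
  row_mx (A *m col_mx X1 Y1) (A *m col_mx X2 Y2).
Proof. by rewrite -block_mxEv block_mxEh mul_mx_row. Qed.

Theorem lemma1
  (R : realFieldType) (nz nc m nw ny nv : nat)
  (* descriptor system matrices, n = nz + nc *)
  (E A : 'M[R]_(nz + nc)) (B : 'M[R]_(nz + nc, m)) (Bw : 'M[R]_(nz + nc, nw))
  (C : 'M[R]_(ny, nz + nc)) (D : 'M[R]_(ny, m)) (Dv : 'M[R]_(ny, nv))
  (* SVD of E with nz = rank E nonzero singular values *)
  (U V : 'M[R]_(nz + nc)) (sigma : 'rV[R]_nz)
  (HU : U^T *m U = 1%:M) (HV : V^T *m V = 1%:M)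
  (Hsigma : forall i, 0 < sigma 0 i)
  (HE : E = U *m block_mx (diag_mx sigma) 0 0 (0 : 'M[R]_nc) *m V^T)
  (* trajectories *)
  (x : nat -> 'cV[R]_(nz + nc)) (u : nat -> 'cV[R]_m) (w : nat -> 'cV[R]_nw)
  (v : nat -> 'cV[R]_nv) (y : nat -> 'cV[R]_ny)
  (* time index *)
  (k : nat) (Hk : (1 <= k)%N)
  (* hat Z_{k-1} *)
  (ngh nch : nat) (Gh : 'M[R]_(nz + nc, ngh)) (ch : 'cV[R]_(nz + nc))
  (Ah : 'M[R]_(nch, ngh)) (bh : 'cV[R]_nch)
  (* W *)
  (ngw ncw : nat) (Gw : 'M[R]_(nw, ngw)) (cw : 'cV[R]_nw)
  (Aw : 'M[R]_(ncw, ngw)) (bw : 'cV[R]_ncw)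
  (* X_a *)
  (nga nca : nat) (Ga : 'M[R]_(nz + nc, nga)) (ca : 'cV[R]_(nz + nc))
  (Aa : 'M[R]_(nca, nga)) (ba : 'cV[R]_nca) :
  let T := Tmat V in
  let z := fun j => invmx T *m x j in
  let At := Atil U sigma V A in
  let Ac := Achk U sigma V A in
  let Bt := Btil U sigma B in
  let Bc := Bchk U sigma B in
  let Bwt := Btil U sigma Bw in
  let Bwc := Bchk U sigma Bw in
  (* transformed descriptor system *)
  (forall j, (1 <= j)%N ->
     usubmx (z j) = At *m z j.-1 + Bt *m u j.-1 + Bwt *m w j.-1 /\
     0 = Ac *m z j.-1 + Bc *m u j.-1 + Bwc *m w j.-1 /\
     y j = C *m T *m z j + D *m u j + Dv *m v j) ->
  (* static relation shifted forward to hold at time k *)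
  (forall j, Ac *m z j + Bc *m u j + Bwc *m w j = 0) ->
  in_cz Gh ch Ah bh (z k.-1) ->
  in_cz Gw cw Aw bw (w k.-1) ->
  in_cz Gw cw Aw bw (w k) ->
  (forall j, in_cz Ga ca Aa ba (x j)) ->
  let Gat := usubmx (invmx T *m Ga) in
  let Gac := dsubmx (invmx T *m Ga) in
  let cat := usubmx (invmx T *m ca) in
  let cac := dsubmx (invmx T *m ca) in
  let cbar := col_mx (At *m ch + Bt *m u k.-1 + Bwt *m cw) cac in
  let Gbar := col_mx
    (row_mx (row_mx (row_mx (At *m Gh) (Bwt *m Gw)) (0 : 'M[R]_(nz, nga))) (0 : 'M[R]_(nz, ngw)))
    (row_mx (row_mx (row_mx (0 : 'M[R]_(nc, ngh)) (0 : 'M[R]_(nc, ngw))) Gac) (0 : 'M[R]_(nc, ngw))) in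
  let Abar := col_mx
    (blkdiag2 (blkdiag2 (blkdiag2 Ah Aw) Aa) Aw)
    (row_mx (row_mx (row_mx
        (Ac *m col_mx (At *m Gh) (0 : 'M[R]_(nc, ngh)))
        (Ac *m col_mx (Bwt *m Gw) (0 : 'M[R]_(nc, ngw))))
        (Ac *m col_mx (0 : 'M[R]_(nz, nga)) Gac))
        (Bwc *m Gw)) in
  let bbar := col_mx (col_mx (col_mx (col_mx bh bw) ba) bw)
    (- (Ac *m cbar) - Bc *m u k - Bwc *m cw) in
  in_cz Gbar cbar Abar bbar (z k).
Proof.
move=> T z At Ac Bt Bc Bwt Bwc dyn static zh_in w1_in w2_in xa_in Gat Gac cat cac.
move=> cbar Gbar Abar bbar.
pose M := col_mx
  (row_mx (row_mx (row_mx At Bwt) (0 : 'M_(nz, nz + nc))) (0 : 'M_(nz, nw)))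
  (row_mx (row_mx (row_mx 0 (0 : 'M_(nc, nw))) (dsubmx (invmx T))) (0 : 'M_(nc, nw))).
pose d := col_mx (Bt *m u k.-1) (0 : 'cV_nc).
pose N := Ac *m M + row_mx (0 : 'M_(nc, (nz + nc) + nw + (nz + nc))) Bwc.
pose p := col_mx (col_mx (col_mx (z k.-1) (w k.-1)) (x k)) (w k).
have p_in := in_cz_prod (in_cz_prod (in_cz_prod zh_in w1_in) (xa_in k)) w2_in.
have zkE : z k = M *m p + d.
  rewrite -[z k]vsubmxK (proj1 (dyn k Hk)) !mul_col_mx !mul_row_col !mul0mx !addr0.
  by rewrite add_col_mx add0r addr0 mul_dsub_mx addrAC.
have Np : N *m p = - (Ac *m d) - Bc *m u k.
  have := static k; move/eqP; rewrite addrAC addr_eq0 => /eqP static_k.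
  rewrite mulmxDl -mulmxA mul_row_col mul0mx add0r -[M *m p](addrK d) -zkE.
  by rewrite mulmxBr addrAC static_k addrC.
have GbarE : M *m blkdiag2 (blkdiag2 (blkdiag2 Gh Gw) Ga) Gw = Gbar.
  by rewrite mul_col_mx !mul_row_blkdiag2 !mul0mx mul_dsub_mx.
have cbarE : M *m col_mx (col_mx (col_mx ch cw) ca) cw + d = cbar.
  rewrite !mul_col_mx !mul_row_col !mul0mx !addr0 add_col_mx add0r addr0.
  by rewrite mul_dsub_mx addrAC.
have bbarE : - (Ac *m d) - Bc *m u k - N *m col_mx (col_mx (col_mx ch cw) ca) cw
           = - (Ac *m cbar) - Bc *m u k - Bwc *m cw.
  rewrite mulmxDl -mulmxA mul_row_col mul0mx add0r -cbarE !mulmxDr !opprD !addrA.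
  by congr (_ + _); rewrite addrC addrA.
have := in_cz_affine M d (in_cz_meet p_in Np).
rewrite -zkE bbarE mulmxDl -!mulmxA GbarE cbarE mul_row_blkdiag2 !mul0mx.
by rewrite !mul_mx_col_row col_mx0 mulmx0 add_row_mx addr0 add0r.
Qed.
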